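(* Let $V$ be a commutative unital quantale whose underlying lattice is a frame, with $\otimes=\wedge$ in $V$. Let $(X,a)$, $(Y,b)$ be $V$-groups with $(Y,b)$ symmetric, $\varphi\colon Y\to\mathrm{Aut}(X)$ a group action, and $c$ a $V$-category structure on $X\rtimes_\varphi Y$ such that $(X,a)\xrightarrow{\langle 1,0\rangle}(X\rtimes_\varphi Y,c)\underset{\langle 0,1\rangle}{\overset{\pi_2}{\rightleftarrows}}(Y,b)$ is a split extension in $\mathsf{VGrp}$. Then $c=a\otimes b=a\wedge b$, i.e. $c((x,y),(x',y'))=a(x,x')\wedge b(y,y')$ for all $x,x'\in X$, $y,y'\in Y$.
   Context: A commutative unital quantale $V$ is a complete lattice with a commutative associative operation $\otimes$ with unit $k$ preserving arbitrary joins in each variable; here $\otimes=\wedge$, so $k=\top$. A $V$-category $(X,a)$: $a\colon X\times X\to V$ with $k\le a(x,x)$ and $a(x,x')\otimes a(x',x'')\le a(x,x'')$; it is symmetric if $a(x,x')=a(x',x)$. A $V$-functor is a map $f$ with $a(x,x')\le b(f(x),f(x'))$. A $V$-group $(X,a,+)$ is a $V$-category with a group structure (additive, not necessarily abelian) such that $a(x_1,x_2)\otimes a(x_1',x_2')\le a(x_1+x_1',x_2+x_2')$; $V$-homomorphisms are group homomorphisms that are $V$-functors; category $\mathsf{VGrp}$ (pointed). The semidirect product $X\rtimes_\varphi Y$ is $X\times Y$ with $(x,y)+(x',y')=(x+\varphi_y(x'),y+y')$, $\varphi_y=\varphi(y)$; $\langle 1,0\rangle(x)=(x,0)$, $\langle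 0,1\rangle(y)=(0,y)$, $\pi_2(x,y)=y$. A split extension in $\mathsf{VGrp}$ means: the middle object is a $V$-group, all three maps are $V$-homomorphisms, $\pi_2\circ\langle 0,1\rangle=1_Y$, and $\langle 1,0\rangle$ is a kernel of $\pi_2$ in $\mathsf{VGrp}$. *)

From HB Require Import structures.
From mathcomp Require Import all_boot all_order.
Set Implicit Arguments. Unset Strict Implicit. Unset Printing Implicit Defensive.
Import Order.TTheory.
Local Open Scope order_scope.

Section Frame.
Context {d : Order.disp_t} (V : tbLatticeType d).

Definition is_lub (S : V -> Prop) (s : V) : Prop :=
  (forall x, S x -> x <= s) /\ (forall u, (forall x, S x -> x <= u) -> s <= u).

(* V is a frame: complete lattice in which binary meet distributes over
   arbitrary joins, i.e. (V, /\, \top) is a commutative unital quantale. *)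
Definition is_frame : Prop :=
  (forall S : V -> Prop, exists s, is_lub S s) /\
  (forall (t : V) (S : V -> Prop) (s : V), is_lub S s ->
     is_lub (fun u => exists x, S x /\ u = t `&` x) (t `&` s)).

(* V-category with tensor = meet and unit k = \top *)
Definition Vcat (X : Type) (a : X -> X -> V) : Prop :=
  (forall x, \top <= a x x) /\
  (forall x x' x'', a x x' `&` a x' x'' <= a x x'').

Definition Vsymmetric (X : Type) (a : X -> X -> V) : Prop :=
  forall x x', a x x' = a x' x.

Definition Vfunctor (X Y : Type) (a : X -> X -> V) (b : Y -> Y -> V)
  (f : X -> Y) : Prop :=
  forall x x', a x x' <= b (f x) (f x').
End Frame.

(* group axioms (additive notation, not necessarily abelian) *)
Definition group_ax (X : Type) (add : X -> X -> X) (zero : X) (opp : X -> X)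
  : Prop :=
  (forall x y z, add x (add y z) = add (add x y) z) /\
  (forall x, add zero x = x) /\ (forall x, add x zero = x) /\
  (forall x, add (opp x) x = zero) /\ (forall x, add x (opp x) = zero).

Definition group_hom (X Y : Type) (addX : X -> X -> X) (addY : Y -> Y -> Y)
  (f : X -> Y) : Prop :=
  forall x x', f (addX x x') = addY (f x) (f x').

Definition Vgroup {d} (V : tbLatticeType d) (X : Type) (add : X -> X -> X)
  (zero : X) (opp : X -> X) (a : X -> X -> V) : Prop :=
  group_ax add zero opp /\ Vcat a /\
  (forall x1 x2 x1' x2', a x1 x2 `&` a x1' x2' <= a (add x1 x1') (add x2 x2')).

Definition Vhom {d} (V : tbLatticeType d) (X Y : Type)
  (addX : X -> X -> X) (a : X -> X -> V) (addY : Y -> Y -> Y) (b : Y -> Y -> V)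
  (f : X -> Y) : Prop :=
  group_hom addX addY f /\ Vfunctor a b f.

Definition group_aut (X : Type) (add : X -> X -> X) (g : X -> X) : Prop :=
  group_hom add add g /\ bijective g.

Definition group_action (X Y : Type) (addX : X -> X -> X) (addY : Y -> Y -> Y)
  (phi : Y -> X -> X) : Prop :=
  (forall y, group_aut addX (phi y)) /\
  (forall y y' x, phi (addY y y') x = phi y (phi y' x)).

Definition sd_add (X Y : Type) (addX : X -> X -> X) (addY : Y -> Y -> Y)
  (phi : Y -> X -> X) (p q : X * Y) : X * Y :=
  (addX p.1 (phi p.2 q.1), addY p.2 q.2).
Definition sd_zero (X Y : Type) (zeroX : X) (zeroY : Y) : X * Y := (zeroX, zeroY).
Definition sd_opp (X Y : Type) (oppX : X -> X) (oppY : Y -> Y)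
  (phi : Y -> X -> X) (p : X * Y) : X * Y :=
  (phi (oppY p.2) (oppX p.1), oppY p.2).

(* k : (K,e) -> (M,c) is a kernel of p : (M,c) -> (Q,b) in VGrp
   (the zero morphism into (Q,b) being constant at zeroQ). *)
Definition is_kernel_VGrp {dV} (V : tbLatticeType dV)
  (K : Type) (addK : K -> K -> K) (e : K -> K -> V)
  (M : Type) (addM : M -> M -> M) (c : M -> M -> V)
  (Q : Type) (zeroQ : Q)
  (k : K -> M) (p : M -> Q) : Prop :=
  (forall z, p (k z) = zeroQ) /\
  (forall (Z : Type) (addZ : Z -> Z -> Z) (zeroZ : Z) (oppZ : Z -> Z)
          (dz : Z -> Z -> V),
     Vgroup addZ zeroZ oppZ dz ->
     forall f : Z -> M, Vhom addZ dz addM c f ->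
     (forall z, p (f z) = zeroQ) ->
     exists g : Z -> K, Vhom addZ dz addK e g /\ (forall z, k (g z) = f z) /\
       (forall g' : Z -> K, Vhom addZ dz addK e g' ->
          (forall z, k (g' z) = f z) -> g' = g)).

From HB Require Import structures.
From mathcomp Require Import all_boot all_order.
Local Open Scope order_scope.
Import Order.TTheory.
Set Implicit Arguments. Unset Strict Implicit. Unset Printing Implicit Defensive.

(* Since <1,0> is a kernel, the structure it carries is the initial one,
   so c restricts to a on X * 0.  Translating by (0, -y) and (0, -y') and using
   c((0,-y),(0,-y')) >= b(-y,-y') >= b(y,y') >= c((x,y),(x',y')) gives
   c((x,y),(x',y')) <= c((x,0),(x',0)) = a(x,x'), while <= b(y,y') holds because
   pi2 is a V-functor.  Conversely (x,y) = (x,0) + (0,y), so a(x,x') /\ b(y,y')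
   <= c((x,y),(x',y')) by continuity of the addition of c.  Only binary meets
   occur. *)

Section GroupFacts.
Variables (X : Type) (add : X -> X -> X) (zero : X) (opp : X -> X).
Hypothesis hX : group_ax add zero opp.

Lemma group_idempotent u : add u u = u -> u = zero.
Proof.
move: hX => [addA [add0x [_ [addNx _]]]] uu.
by rewrite -[u]add0x -(addNx u) -addA uu.
Qed.

Lemma group_hom_zero (Z : Type) (addZ : Z -> Z -> Z) (zeroZ : Z) (f : Z -> X) :
  addZ zeroZ zeroZ = zeroZ -> group_hom addZ add f -> f zeroZ = zero.
Proof. by move=> zz hf; apply: group_idempotent; rewrite -hf zz. Qed.

End GroupFacts.

Section VGroupFacts.
Context {d : Order.disp_t} (V : tbLatticeType d).

Lemma Vgroup_comap (Z : Type) (addZ : Z -> Z -> Z) (zeroZ : Z) (oppZ : Z -> Z)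
  (M : Type) (addM : M -> M -> M) (zeroM : M) (oppM : M -> M) (c : M -> M -> V)
  (f : Z -> M) :
  group_ax addZ zeroZ oppZ -> Vgroup addM zeroM oppM c -> group_hom addZ addM f ->
  Vgroup addZ zeroZ oppZ (fun z z' => c (f z) (f z')).
Proof.
move=> gZ [_ [[cR cT] cC]] hf; split=> //; split; first by split.
by move=> z1 z2 z1' z2'; rewrite !hf.
Qed.

Lemma Vgroup_le_opp (Y : Type) (add : Y -> Y -> Y) (zero : Y) (opp : Y -> Y)
  (b : Y -> Y -> V) :
  Vgroup add zero opp b -> forall y y', b y' y <= b (opp y) (opp y').
Proof.
move=> [[addA [add0x [addx0 [addNx addxN]]]] [[bR _] bC]] y y'.
have bNN : b (opp y) (opp y) = \top by apply/le_anti; rewrite lex1 bR.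
have bNN' : b (opp y') (opp y') = \top by apply/le_anti; rewrite lex1 bR.
have E1 : add (add (opp y) y') (opp y') = opp y by rewrite -addA addxN addx0.
have E2 : add (add (opp y) y) (opp y') = opp y' by rewrite addNx add0x.
have := bC (add (opp y) y') (add (opp y) y) (opp y') (opp y').
rewrite E1 E2 bNN' meetx1; apply: le_trans.
by have := bC (opp y) (opp y) y' y; rewrite bNN meet1x.
Qed.

Lemma is_kernel_VGrp_initial (K : Type) (addK : K -> K -> K) (zeroK : K)
  (oppK : K -> K) (e : K -> K -> V)
  (M : Type) (addM : M -> M -> M) (zeroM : M) (oppM : M -> M) (c : M -> M -> V)
  (Q : Type) (zeroQ : Q) (k : K -> M) (p : M -> Q) :
  group_ax addK zeroK oppK -> Vgroup addM zeroM oppM c ->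
  Vhom addK e addM c k -> injective k ->
  is_kernel_VGrp addK e addM c zeroQ k p ->
  forall z z', c (k z) (k z') = e z z'.
Proof.
move=> gK hM [hk ke] k_inj [pk0 kU] z z'.
apply/le_anti; rewrite ke andbT.
have ck_grp := Vgroup_comap gK hM hk.
have k_hom : Vhom addK (fun z z' => c (k z) (k z')) addM c k by split.
have [g [[_ gF] [kg _]]] := kU K addK zeroK oppK _ ck_grp k k_hom pk0.
have gE w : g w = w by apply: k_inj; rewrite kg.
by have := gF z z'; rewrite !gE.
Qed.

End VGroupFacts.

Section SemidirectProduct.
Variables (X : Type) (addX : X -> X -> X) (zeroX : X) (oppX : X -> X).
Variables (Y : Type) (addY : Y -> Y -> Y) (zeroY : Y) (oppY : Y -> Y).
Variable phi : Y -> X -> X.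
Hypotheses (hX : group_ax addX zeroX oppX) (hY : group_ax addY zeroY oppY).
Hypothesis hphi : group_action addX addY phi.

Lemma action_zero x : phi zeroY x = x.
Proof.
move: hphi hY => [aut phiM] [_ [add0y _]].
have [_ [g phiK _]] := aut zeroY.
by apply: (can_inj phiK); rewrite -phiM add0y.
Qed.

Lemma action_fix_zero y : phi y zeroX = zeroX.
Proof.
apply: (group_hom_zero hX); first by case: hX => _ [].
by case: (hphi.1 y).
Qed.

Lemma sd_add_inl_inr x y : sd_add addX addY phi (x, zeroY) (zeroX, y) = (x, y).
Proof.
move: hX hY => [_ [_ [addx0 _]]] [_ [add0y _]].
by rewrite /sd_add /= action_zero addx0 add0y.
Qed.

Lemma sd_add_inr_opp x y :
  sd_add addX addY phi (x, y) (zeroX, oppY y) = (x, zeroY).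
Proof.
move: hX hY => [_ [_ [addx0 _]]] [_ [_ [_ [_ addyN]]]].
by rewrite /sd_add /= action_fix_zero addx0 addyN.
Qed.

End SemidirectProduct.

Theorem proposition7p7 {d : Order.disp_t} (V : tbLatticeType d)
  (hV : is_frame V)
  (X : Type) (addX : X -> X -> X) (zeroX : X) (oppX : X -> X) (a : X -> X -> V)
  (Y : Type) (addY : Y -> Y -> Y) (zeroY : Y) (oppY : Y -> Y) (b : Y -> Y -> V)
  (hX : Vgroup addX zeroX oppX a) (hY : Vgroup addY zeroY oppY b)
  (hYsym : Vsymmetric b)
  (phi : Y -> X -> X) (hphi : group_action addX addY phi)
  (c : X * Y -> X * Y -> V)
  (hc : Vgroup (sd_add addX addY phi) (sd_zero zeroX zeroY)
               (sd_opp oppX oppY phi) c)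
  (h10 : Vhom addX a (sd_add addX addY phi) c (fun x => (x, zeroY)))
  (hpi2 : Vhom (sd_add addX addY phi) c addY b (fun p => p.2))
  (h01 : Vhom addY b (sd_add addX addY phi) c (fun y => (zeroX, y)))
  (hsplit : forall y : Y, ((zeroX, y) : X * Y).2 = y)
  (hker : is_kernel_VGrp addX a (sd_add addX addY phi) c zeroY
            (fun x => (x, zeroY)) (fun p => p.2)) :
  forall (x x' : X) (y y' : Y), c (x, y) (x', y') = a x x' `&` b y y'.
Proof.
have gX := hX.1; have gY := hY.1; have cC := hc.2.2.
have inl_inj : injective (fun x : X => (x, zeroY)) by move=> x1 x2 [].
have c_inl := is_kernel_VGrp_initial gX hc h10 inl_inj hker.
move=> x x' y y'; apply/le_anti/andP; split.
- have c_le_b := hpi2.2 (x, y) (x', y'); rewrite lexI c_le_b andbT -c_inl.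
  have := cC (x, y) (x', y') (zeroX, oppY y) (zeroX, oppY y').
  rewrite !(sd_add_inr_opp gX gY hphi); apply: le_trans.
  rewrite lexI lexx /=; apply: le_trans (h01.2 _ _).
  by rewrite -hYsym; apply: le_trans c_le_b (Vgroup_le_opp hY _ _).
- have := cC (x, zeroY) (x', zeroY) (zeroX, y) (zeroX, y').
  rewrite !(sd_add_inl_inr gX gY hphi) c_inl; apply: le_trans.
  exact: leI2 (h01.2 _ _).
Qed.
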